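(* For every partition $(P_H,P_L)$ of $E$ with $P_L\neq\emptyset$ we have $\sum_{e\in P_L}\mathrm{wt}_{P_L}(e)\le b$. If moreover $0<\epsilon<1$, $\bar b,\bar w$ satisfy $b/2\le\bar b\le 2b$ and $w/6\le\bar w\le 6w$, and $(P_H,P_L)$ is appropriate with respect to $\bar b,\bar w,\epsilon$, then $$b(1-c_H\epsilon)\le \sum_{e\in P_L}\mathrm{wt}_{P_L}(e)\le b,$$ where $c_H=1.77\times 10^4$.
   Context: Let $G=(V,E)$ be a bipartite graph with bipartition $V=U\cup L$; $d_v$ is the degree of $v$; for $e=(u,v)$, $d_e=d_u+d_v-2$; $w$ is the number of wedges (paths with two edges). A butterfly is a set of four distinct vertices $\{u_1,u_2,v_1,v_2\}$, $u_i\in U$, $v_i\in L$, with all four pairs $u_iv_j$ edges (its four edges); $b$ is the number of butterflies and $b(e)$ the number containing edge $e$. Given a nonempty $P_L\subseteq E$: for a butterfly $B$, $\mathrm{wt}_{P_L}(B)=0$ if none of its edges lies in $P_L$, and $\mathrm{wt}_{P_L}(B)=1/\ell$ if exactly $\ell>0$ of its edges lie in $P_L$; for an edge $e$, $\mathrm{wt}_{P_L}(e)=0$ if $e\notin P_L$ and $\mathrm{wt}_{P_L}(e)=\sum_{B\ni e}\mathrm{wt}_{P_L}(B)$ (sum over butterflies containing $e$) if $e\in P_L$. Given $\bar b,\bar w,\epsilon$, an edge $e$ is heavy if $b(e)>2\bar b^{3/4}/\epsilon^{1/4}$ or $d_e>\bar w/(\epsilon\bar b)^{1/4}$, and light if $b(e)<\bar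 b^{3/4}/(2\epsilon^{1/4})$ and $d_e<\bar w/(\epsilon\bar b)^{1/4}$. A partition $(P_H,P_L)$ of $E$ is appropriate if every heavy edge is in $P_H$ and every light edge is in $P_L$. *)

From HB Require Import structures.
From mathcomp Require Import all_boot all_order all_algebra.
From mathcomp Require Import all_classical all_reals all_analysis.
Set Implicit Arguments. Unset Strict Implicit. Unset Printing Implicit Defensive.
Import Order.TTheory GRing.Theory Num.Theory.
Local Open Scope ring_scope.

(* A bipartite graph with sides U and L is given by its edge set E : {set U * L}. *)
Section Bip.
Variables (U L : finType) (E : {set U * L}).

Definition degU (u : U) : nat := #|[set v : L | (u, v) \in E]|.
Definition degL (v : L) : nat := #|[set u : U | (u, v) \in E]|.

Definition wedges : {set {set U * L}} :=
  [set S : {set U * L} | [&& S \subset E, #|S| == 2 &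
     [exists e1 in S, exists e2 in S,
        (e1 != e2) && ((e1.1 == e2.1) || (e1.2 == e2.2))]]].
Definition nwedges : nat := #|wedges|.

(* a butterfly {u1,u2,v1,v2} is encoded by the pair ({u1,u2},{v1,v2}) *)
Definition bedges (X : {set U} * {set L}) : {set U * L} := finset.setX X.1 X.2.
Definition butterflies : {set {set U} * {set L}} :=
  [set X : {set U} * {set L} | [&& #|X.1| == 2, #|X.2| == 2 & bedges X \subset E]].
Definition nbutterflies : nat := #|butterflies|.
Definition nbutterflies_e (e : U * L) : nat :=
  #|[set X in butterflies | e \in bedges X]|.

Variable R : realType.

Definition wtB (PL : {set U * L}) (X : {set U} * {set L}) : R :=
  let l := #|bedges X :&: PL| in if l == 0%N then 0 else (l%:R)^-1.

Definition wtE (PL : {set U * L}) (e : U * L) : R :=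
  if e \in PL then \sum_(X in butterflies | e \in bedges X) wtB PL X else 0.

Definition dedge (e : U * L) : R := (degU e.1)%:R + (degL e.2)%:R - 2.

Definition is_partition (PH PL : {set U * L}) : Prop :=
  PH :|: PL = E /\ PH :&: PL = finset.set0.

Definition heavy (bb wb eps : R) (e : U * L) : Prop :=
  (nbutterflies_e e)%:R > 2 * powR bb (3/4) / powR eps (1/4)
  \/ dedge e > wb / powR (eps * bb) (1/4).

Definition light (bb wb eps : R) (e : U * L) : Prop :=
  (nbutterflies_e e)%:R < powR bb (3/4) / (2 * powR eps (1/4))
  /\ dedge e < wb / powR (eps * bb) (1/4).

Definition appropriate (bb wb eps : R) (PH PL : {set U * L}) : Prop :=
  is_partition PH PL /\
  (forall e, e \in E -> heavy bb wb eps e -> e \in PH) /\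
  (forall e, e \in E -> light bb wb eps e -> e \in PL).

End Bip.

From HB Require Import structures.
From mathcomp Require Import all_boot all_order all_algebra.
From mathcomp Require Import all_classical all_reals all_analysis.
From mathcomp Require Import ring lra.
Set Implicit Arguments. Unset Strict Implicit. Unset Printing Implicit Defensive.
Import Order.TTheory GRing.Theory Num.Theory.
Local Open Scope ring_scope.

(* Summing wt over P_L counts every butterfly meeting P_L exactly once, so the
   sum is the number of such butterflies, at most b.  The butterflies it misses
   lie entirely inside P_H.  No edge of P_H is light, so each one reaches the
   light threshold for b(e) or for d_e; since sum_e b(e) = 4b and
   sum_e d_e <= 2w, Markov-type counting bounds |P_H|^4 by a constant times
   eps b.  Finally an edge together with its opposite edge determines a
   butterfly, so m >= 4 edges span at most m^2/4 <= m^4/64 butterflies. *)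

Lemma sum_card_incidence (I J : finType) (S : {set I}) (A : {set J})
    (g : I -> {set J}) :
  {in S, forall X, g X \subset A} ->
  (\sum_(X in S) #|g X| = \sum_(e in A) #|[set X in S | e \in g X]|)%N.
Proof.
move=> sgA.
rewrite (eq_bigr (fun X => \sum_(e in A | e \in g X) 1)%N) => [|X XS]; last first.
  rewrite -sum1_card; apply: eq_bigl => e.
  by rewrite andb_idl // => /(fintype.subsetP (sgA X XS)).
rewrite (exchange_big_dep (mem A)) => [|X e _ /andP[]//].
apply: eq_bigr => e /= eA; rewrite -sum1_card; apply: eq_bigl => X.
by rewrite inE eA.
Qed.

Lemma leq_sum_subset (T : finType) (A B : {set T}) (F : T -> nat) :
  A \subset B -> (\sum_(i in A) F i <= \sum_(i in B) F i)%N.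
Proof.
by move=> AB; rewrite [X in (_ <= X)%N](big_setID A) /= (finset.setIidPr AB) leq_addr.
Qed.

Lemma card_ge_mul_le_sum (R : realDomainType) (T : finType) (A : {set T})
    (F : T -> R) (t : R) :
  {in A, forall x, 0 <= F x} -> #|[set x in A | t <= F x]|%:R * t <= \sum_(x in A) F x.
Proof.
move=> F0; rewrite mulr_natl -sumr_const [X in _ <= X](bigID (fun x => t <= F x)) /=.
apply: le_trans (_ : _ <= \sum_(x in A | t <= F x) F x) _.
  rewrite (eq_bigl (fun x => (x \in A) && (t <= F x))) => [|x]; last by rewrite inE.
  by apply: ler_sum => x /andP[].
by rewrite lerDl sumr_ge0 // => x /andP[/F0].
Qed.

Lemma set2_inj (T : finType) (a x y : T) : x != a -> [set a; x] = [set a; y] -> x = y.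
Proof.
by move=> xa axy; have := set22 a x; rewrite axy !inE (negbTE xa) => /eqP.
Qed.

Definition other (T : finType) (A : {set T}) (a : T) : T := odflt a [pick x in A :\ a].

Lemma other_spec (T : finType) (A : {set T}) (a : T) : #|A| = 2%N -> a \in A ->
  other A a \in A /\ A = [set a; other A a].
Proof.
move=> A2 aA; have : #|A :\ a| == 1%N by move: (cardsD1 a A); rewrite aA A2 add1n => -[<-].
case/cards1P => o Ao.
have -> : other A a = o.
  by rewrite /other; case: pickP => [x|/(_ o)]; rewrite Ao !inE ?eqxx // => /eqP.
have Aao : A = [set a; o] by rewrite -Ao finset.setD1K.
by split; rewrite {1}Aao ?set22.
Qed.

Section RealBounds.
Variable R : realType.
Implicit Types x y b w eps bb wb m s K : R.

Lemma powR_divnK x (k n : nat) :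
  0 <= x -> (0 < n)%N -> powR x (k%:R / n%:R) ^+ n = x ^+ k.
Proof.
move=> x0 n0; rewrite -powR_mulrn ?powR_ge0 // -powRrM mulfVK ?powR_mulrn //.
by rewrite pnatr_eq0 -lt0n.
Qed.

Lemma sqr_addr_le x y : (x + y) ^+ 2 <= 2 * (x ^+ 2 + y ^+ 2).
Proof.
rewrite -subr_ge0 (_ : _ - _ = (x - y) ^+ 2) ?sqr_ge0 //; ring.
Qed.

Lemma expr4_addr_le x y : (x + y) ^+ 4 <= 8 * (x ^+ 4 + y ^+ 4).
Proof.
have e4 z : z ^+ 4 = (z ^+ 2) ^+ 2 by rewrite -exprM.
rewrite !e4; apply: le_trans (_ : (2 * (x ^+ 2 + y ^+ 2)) ^+ 2 <= _).
  by rewrite lerXn2r ?nnegrE ?sqr_addr_le ?sqr_ge0 ?mulr_ge0 ?addr_ge0 ?sqr_ge0.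
by rewrite exprMn; have := sqr_addr_le (x ^+ 2) (y ^+ 2); lra.
Qed.

(* Large constants are written as products: a literal such as 32768 is
   elaborated through a unary natural number and overflows the stack. *)
Lemma butterfly_threshold_count b bb eps m :
  0 < b -> 0 < eps -> b / 2 <= bb -> 0 <= m ->
  m * (powR bb (3/4) / (2 * powR eps (1/4))) <= 4 * b -> m ^+ 4 <= 8 * 4096 * eps * b.
Proof.
move=> b0 eps0 bb_ge m0.
have bb0 : 0 <= bb by lra.
have P4 : powR bb (3/4) ^+ 4 = bb ^+ 3 by rewrite (@powR_divnK _ 3 4).
have Q4 : powR eps (1/4) ^+ 4 = eps by rewrite (@powR_divnK _ 1 4) ?expr1 ?ltW.
have Q0 : 0 < powR eps (1/4) by rewrite powR_gt0.
move: P4 Q4 Q0 (powR_ge0 bb (3/4)).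
set P := powR bb _; set Q := powR eps _ => P4 Q4 Q0 P0.
rewrite mulrA ler_pdivrMr ?mulr_gt0 // => hm.
have hm4 : (m * P) ^+ 4 <= (4 * b * (2 * Q)) ^+ 4.
  by rewrite lerXn2r ?nnegrE ?mulr_ge0 // ltW.
rewrite !exprMn P4 Q4 in hm4.
have b3 : (b / 2) ^+ 3 <= bb ^+ 3 by rewrite lerXn2r ?nnegrE // divr_ge0 // ltW.
have b30 : 0 < (b / 2) ^+ 3 by rewrite exprn_gt0 // divr_gt0.
rewrite -(ler_pM2r b30).
have -> : 8 * 4096 * eps * b * (b / 2) ^+ 3 = 4 ^+ 4 * b ^+ 4 * (2 ^+ 4 * eps) by field.
exact: le_trans (ler_wpM2l (exprn_ge0 4 m0) b3) hm4.
Qed.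

Lemma wedge_threshold_count b w bb wb eps m :
  0 < w -> 0 < eps -> 0 < bb -> bb <= 2 * b -> w / 6 <= wb -> 0 <= m ->
  m * (wb / powR (eps * bb) (1/4)) <= 2 * w -> m ^+ 4 <= 8 * 5184 * eps * b.
Proof.
move=> w0 eps0 bb0 bb_le wb_ge m0.
have Q4 : powR (eps * bb) (1/4) ^+ 4 = eps * bb.
  by rewrite (@powR_divnK _ 1 4) ?expr1 ?mulr_ge0 ?ltW.
have Q0 : 0 < powR (eps * bb) (1/4) by rewrite powR_gt0 ?mulr_gt0.
move: Q4 Q0; set Q := powR _ _ => Q4 Q0.
rewrite mulrA ler_pdivrMr // => hm.
have hmQ : m <= 12 * Q.
  rewrite -(ler_pM2r (_ : 0 < w / 6)) ?divr_gt0 //.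
  have -> : 12 * Q * (w / 6) = 2 * w * Q by field.
  by apply: le_trans hm; rewrite ler_wpM2l.
have : m ^+ 4 <= (12 * Q) ^+ 4 by rewrite lerXn2r ?nnegrE ?mulr_ge0 ?(ltW Q0).
rewrite exprMn Q4 => h; apply: le_trans h _.
have -> : 8 * 5184 * eps * b = 12 ^+ 4 * (eps * (2 * b)) by ring.
by rewrite ler_wpM2l ?exprn_ge0 // ler_wpM2l // ltW.
Qed.

Lemma card_sq_bound s m K : 4 <= m -> 4 * s <= m ^+ 2 -> m ^+ 4 <= K -> 64 * s <= K.
Proof.
move=> m4 sm mK.
have : 16 * m ^+ 2 <= m ^+ 4.
  rewrite (_ : m ^+ 4 = m ^+ 2 * m ^+ 2) ?ler_wpM2r ?sqr_ge0 //; last by rewrite -exprD.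
  by rewrite expr2; nra.
lra.
Qed.
End RealBounds.

Section Bipartite.
Variables (U L : finType).
Implicit Types (A E P : {set U * L}) (X : {set U} * {set L}) (e : U * L).

Definition nwedges_e E e : nat := #|[set W in wedges E | e \in W]|.

Definition butterflies_meeting E P : {set {set U} * {set L}} :=
  [set X in butterflies E | bedges X :&: P != finset.set0].

Lemma butterfly_bedges_sub A X : X \in butterflies A -> bedges X \subset A.
Proof. by rewrite inE => /and3P[]. Qed.

Lemma butterfly_bedges_card A X : X \in butterflies A -> #|bedges X| = 4%N.
Proof. by rewrite inE /bedges cardsX => /and3P[/eqP-> /eqP-> _]. Qed.

Lemma butterfliesS A E : A \subset E -> butterflies A \subset butterflies E.
Proof.
move=> AE; apply/fintype.subsetP => X; rewrite !inE => /and3P[-> -> XA] /=.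
exact: fintype.subset_trans XA AE.
Qed.

Lemma butterfly_other A X e : X \in butterflies A -> e \in bedges X ->
  X = ([set e.1; other X.1 e.1], [set e.2; other X.2 e.2]) /\
  (other X.1 e.1, other X.2 e.2) \in A.
Proof.
move=> XA; rewrite inE => /andP[e1X e2X].
move: (XA); rewrite inE => /and3P[/eqP X1 /eqP X2 _].
case: (other_spec X1 e1X) => X1o X1E; case: (other_spec X2 e2X) => X2o X2E.
split; first by rewrite -X1E -X2E; case: X {XA X1 X2 e1X e2X X1o X2o X1E X2E}.
by apply: (fintype.subsetP (butterfly_bedges_sub XA)); rewrite inE X1o.
Qed.

Lemma nbutterflies_e_le_card A e : (nbutterflies_e A e <= #|A|)%N.
Proof.
pose opp X := (other X.1 e.1, other X.2 e.2).
have opp_inj : {in [set X in butterflies A | e \in bedges X] &, injective opp}.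
  move=> X Y /setIdP[XA eX] /setIdP[YA eY] [eq1 eq2].
  case: (butterfly_other XA eX) => -> _; case: (butterfly_other YA eY) => -> _.
  by rewrite /= eq1 eq2.
rewrite /nbutterflies_e -(card_in_imset opp_inj); apply: subset_leq_card.
by apply/fintype.subsetP => _ /imsetP[X /setIdP[XA eX] ->]; case: (butterfly_other XA eX).
Qed.

Lemma sum_nbutterflies_e A : (\sum_(e in A) nbutterflies_e A e = 4 * nbutterflies A)%N.
Proof.
rewrite -(sum_card_incidence (g := @bedges U L)) => [|X]; last exact: butterfly_bedges_sub.
rewrite (eq_bigr (fun _ => 4%N)) => [|X]; last exact: butterfly_bedges_card.
by rewrite sum_nat_const mulnC.
Qed.

Lemma nbutterflies_le_sq A : (4 * nbutterflies A <= #|A| ^ 2)%N.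
Proof.
rewrite -sum_nbutterflies_e -mulnn -sum_nat_const.
by apply: leq_sum => e _; apply: nbutterflies_e_le_card.
Qed.

Lemma wedge_pair E e1 e2 : e1 \in E -> e2 \in E -> e1 != e2 ->
  (e1.1 == e2.1) || (e1.2 == e2.2) -> [set e1; e2] \in wedges E.
Proof.
move=> e1E e2E e12 share; rewrite inE cards2 e12; apply/and3P; split => //.
  by apply/fintype.subsetP => x; rewrite !inE => /orP[]/eqP->.
apply/existsP; exists e1; rewrite set21 /=.
by apply/existsP; exists e2; rewrite set22 e12.
Qed.

Lemma sum_nwedges_e E : (\sum_(e in E) nwedges_e E e = 2 * nwedges E)%N.
Proof.
rewrite -(sum_card_incidence (g := id)) => [|W]; last by rewrite inE => /and3P[].
rewrite (eq_bigr (fun _ => 2%N)) => [|W]; last by rewrite inE => /and3P[_ /eqP].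
by rewrite sum_nat_const mulnC.
Qed.

Lemma pred_degrees_le_nwedges_e E u v : (u, v) \in E ->
  ((degU E u).-1 + (degL E v).-1 <= nwedges_e E (u, v))%N.
Proof.
move=> uvE.
set A := [set v' | (u, v') \in E] :\ v; set B := [set u' | (u', v) \in E] :\ u.
pose fU v' := [set (u, v); (u, v')]; pose fL u' := [set (u, v); (u', v)].
have cardA : #|A| = (degU E u).-1.
  by rewrite /degU (cardsD1 v [set v' | (u, v') \in E]) inE uvE.
have cardB : #|B| = (degL E v).-1.
  by rewrite /degL (cardsD1 u [set u' | (u', v) \in E]) inE uvE.
have fU_inj : {in A &, injective fU}.
  move=> v1 v2; rewrite !inE => /andP[v1v _] _ /set2_inj.
  by rewrite xpair_eqE eqxx => /(_ v1v) [].
have fL_inj : {in B &, injective fL}.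
  move=> u1 u2; rewrite !inE => /andP[u1u _] _ /set2_inj.
  by rewrite xpair_eqE eqxx andbT => /(_ u1u) [].
have fUL0 : fU @: A :&: fL @: B = finset.set0.
  apply/setP => W; rewrite !inE; apply/andP => -[/imsetP[v' v'A ->] /imsetP[u' _]].
  move: v'A; rewrite !inE => /andP[v'v _] /set2_inj.
  by rewrite xpair_eqE eqxx => /(_ v'v) [_ /eqP]; rewrite (negbTE v'v).
have sub : fU @: A :|: fL @: B \subset [set W in wedges E | (u, v) \in W].
  apply/fintype.subsetP => W; rewrite inE => /orP[] /imsetP[x xA ->];
    rewrite !inE in xA; case/andP: xA => xne xE;
    rewrite inE /fU /fL set21 andbT; apply: wedge_pair => //=;
    by rewrite ?eqxx ?orbT // xpair_eqE eqxx ?andbT eq_sym.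
rewrite -cardA -cardB -(card_in_imset fU_inj) -(card_in_imset fL_inj).
have := cardsU (fU @: A) (fL @: B); rewrite fUL0 cards0 subn0 => <-.
exact: subset_leq_card.
Qed.

Lemma dedgeE (R : realType) E e : e \in E ->
  dedge E R e = ((degU E e.1).-1 + (degL E e.2).-1)%:R.
Proof.
case: e => u v uvE /=.
have degU_gt0 : (0 < degU E u)%N by rewrite card_gt0; apply/set0Pn; exists v; rewrite inE.
have degL_gt0 : (0 < degL E v)%N by rewrite card_gt0; apply/set0Pn; exists u; rewrite inE.
rewrite /dedge /= -{1}(prednK degU_gt0) -{1}(prednK degL_gt0) natrD !mulrSr; lra.
Qed.

Lemma dedge_ge0_le_nwedges_e (R : realType) E e : e \in E ->
  0 <= dedge E R e <= (nwedges_e E e)%:R.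
Proof.
move=> eE; rewrite dedgeE // ler0n ler_nat.
by case: e eE => u v; apply: pred_degrees_le_nwedges_e.
Qed.

Lemma nwedges_gt0 E : (0 < nbutterflies E -> 0 < nwedges E)%N.
Proof.
case/card_gt0P => X XE; have XsubE := butterfly_bedges_sub XE.
move: XE; rewrite inE => /and3P[/cards2P[u1 [u2 [_ X1]]] /cards2P[v1 [v2 [v12 X2]]] _].
have inX u v : u \in X.1 -> v \in X.2 -> (u, v) \in E.
  by move=> uX vX; apply: (fintype.subsetP XsubE); rewrite inE uX.
apply/card_gt0P; exists [set (u1, v1); (u1, v2)]; apply: wedge_pair => //=;
  by rewrite ?inX ?X1 ?X2 ?set21 ?set22 ?xpair_eqE ?eqxx.
Qed.

Lemma sum_wtB_meets (R : realType) P X :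
  \sum_(e in P | e \in bedges X) wtB R P X = (bedges X :&: P != finset.set0)%:R.
Proof.
rewrite (eq_bigl (fun e => e \in bedges X :&: P)) => [|e]; last first.
  by rewrite finset.in_setI andbC.
rewrite sumr_const /wtB -cards_eq0; case: eqP => [->|/eqP nz]; first by rewrite mulr0n.
by rewrite -[X in X = _]mulr_natr mulVf // pnatr_eq0.
Qed.

Lemma sum_wtE (R : realType) E P :
  \sum_(e in P) wtE E R P e = (#|butterflies_meeting E P|)%:R.
Proof.
rewrite (eq_bigr (fun e => \sum_(X in butterflies E | e \in bedges X) wtB R P X));
  last by move=> e eP; rewrite /wtE eP.
rewrite (exchange_big_dep (fun X => X \in butterflies E)); last by move=> e X _ /andP[].
rewrite -sum1_card natr_sum big_mkcond [RHS]big_mkcond; apply: eq_bigr => X _.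
rewrite [X \in butterflies_meeting E P]inE; case XE: (X \in butterflies E) => //.
by rewrite /= sum_wtB_meets; case: (_ != _).
Qed.

Lemma nbutterflies_le_meeting_add E PH PL : is_partition E PH PL ->
  (nbutterflies E <= #|butterflies_meeting E PL| + nbutterflies PH)%N.
Proof.
case=> PHUPL _; rewrite /nbutterflies.
set M := butterflies_meeting E PL.
apply: leq_trans (subset_leq_card (_ : _ \subset M :|: butterflies PH)) _.
  apply/fintype.subsetP => X XE; rewrite inE [X \in M]inE XE /=.
  case: (boolP (bedges X :&: PL != finset.set0)) => //= /negPn/eqP XPL0.
  move: XE; rewrite !inE => /and3P[-> -> XsubE] /=.
  apply/fintype.subsetP => e eX; have := fintype.subsetP XsubE e eX.
  rewrite -PHUPL inE => /orP[] // ePL.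
  by have := finset.in_setI e (bedges X) PL; rewrite eX ePL XPL0 inE.
by rewrite cardsU leq_subr.
Qed.

End Bipartite.

Section HeavySide.
Variables (R : realType) (U L : finType) (E : {set U * L}) (eps bb wb : R).
Variables PH PL : {set U * L}.

Local Notation b := ((nbutterflies E)%:R : R).
Local Notation w := ((nwedges E)%:R : R).
Local Notation bthreshold := (powR bb (3/4) / (2 * powR eps (1/4))).
Local Notation dthreshold := (wb / powR (eps * bb) (1/4)).

Hypotheses (eps_gt0 : 0 < eps) (bb_ge : b / 2 <= bb) (bb_le : bb <= 2 * b).
Hypotheses (wb_ge : w / 6 <= wb) (PH_PL : appropriate E bb wb eps PH PL).

Lemma heavy_side_sub : PH \subset E.
Proof.
by case: PH_PL => -[<- _] _; apply/fintype.subsetP => e ePH; rewrite finset.in_setU ePH.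
Qed.

Lemma heavy_side_cover :
  PH \subset [set e in PH | bthreshold <= (nbutterflies_e E e)%:R]
         :|: [set e in PH | dthreshold <= dedge E R e].
Proof.
case: PH_PL => -[_ PHPL0] [_ light_PL].
apply/fintype.subsetP => e ePH; rewrite !inE ePH /=.
case: leP => //= b_lt; case: leP => //= d_lt.
have ePL : e \in PL by apply: light_PL; [exact: fintype.subsetP heavy_side_sub e ePH | split].
by have := finset.in_setI e PH PL; rewrite PHPL0 ePH ePL inE.
Qed.

Lemma card_heavy_side_expr4_le : (0 < nbutterflies E)%N ->
  (#|PH|%:R) ^+ 4 <= 8 * (8 * 4096 * eps * b + 8 * 5184 * eps * b).
Proof.
move=> b_gt0; have w_gt0 := nwedges_gt0 b_gt0.
have := subset_leq_card heavy_side_cover; rewrite cardsU.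
set P1 := [set e in PH | _ <= _]; set P2 := [set e in PH | _ <= _] => PH_le.
have {}PH_le : #|PH|%:R <= #|P1|%:R + #|P2|%:R :> R.
  by rewrite -natrD ler_nat (leq_trans PH_le) ?leq_subr.
have P1_bound : #|P1|%:R * bthreshold <= 4 * b.
  apply: le_trans (card_ge_mul_le_sum _ _) _ => [e _|]; first exact: ler0n.
  rewrite -natr_sum -natrM -sum_nbutterflies_e ler_nat.
  exact: leq_sum_subset heavy_side_sub.
have P2_bound : #|P2|%:R * dthreshold <= 2 * w.
  apply: le_trans (card_ge_mul_le_sum _ _) _ => [e /(fintype.subsetP heavy_side_sub) eE|].
    by case/andP: (dedge_ge0_le_nwedges_e R eE).
  apply: le_trans (_ : _ <= \sum_(e in PH) (nwedges_e E e)%:R) _.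
    apply: ler_sum => e /(fintype.subsetP heavy_side_sub) eE.
    by case/andP: (dedge_ge0_le_nwedges_e R eE).
  rewrite -natr_sum -natrM -sum_nwedges_e ler_nat.
  exact: leq_sum_subset heavy_side_sub.
have bb_gt0 : 0 < bb by apply: lt_le_trans bb_ge; rewrite divr_gt0 ?ltr0n.
apply: le_trans (_ : _ <= (#|P1|%:R + #|P2|%:R) ^+ 4) _.
  by rewrite lerXn2r ?nnegrE ?addr_ge0.
apply: le_trans (expr4_addr_le _ _) _; apply: ler_wpM2l; first exact: ler0n.
apply: lerD.
  by apply: butterfly_threshold_count P1_bound; rewrite ?ltr0n.
by apply: (wedge_threshold_count (w := w)) P2_bound; rewrite ?ltr0n.
Qed.

Lemma nbutterflies_heavy_side_le : (nbutterflies PH)%:R <= 17700%:R * eps * b.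
Proof.
rewrite /nbutterflies; have [->|/card_gt0P[X XPH]] := posnP #|butterflies PH|.
  by rewrite !mulr_ge0 ?ler0n ?ltW.
have b_gt0 : (0 < nbutterflies E)%N.
  by apply/card_gt0P; exists X; apply: (fintype.subsetP (butterfliesS heavy_side_sub)).
have PH_ge4 : 4 <= #|PH|%:R :> R.
  by rewrite ler_nat -(butterfly_bedges_card XPH) subset_leq_card ?butterfly_bedges_sub.
have PH_sq : 4 * #|butterflies PH|%:R <= #|PH|%:R ^+ 2 :> R.
  by rewrite -natrX -natrM ler_nat nbutterflies_le_sq.
(* 64 s <= 8 * 8 * (4096 + 5184) eps b, i.e. s <= 9280 eps b. *)
have := card_sq_bound PH_ge4 PH_sq (card_heavy_side_expr4_le b_gt0).
have := ltW eps_gt0; have := ler0n R (nbutterflies E); nra.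
Qed.

End HeavySide.

Theorem lemma10 (R : realType) (U L : finType) (E : {set U * L}) :
  (forall PH PL : {set U * L}, is_partition E PH PL -> PL != finset.set0 ->
     \sum_(e in PL) wtE E R PL e <= (nbutterflies E)%:R)
  /\
  (forall (eps bb wb : R) (PH PL : {set U * L}),
     0 < eps -> eps < 1 ->
     (nbutterflies E)%:R / 2 <= bb -> bb <= 2 * (nbutterflies E)%:R ->
     (nwedges E)%:R / 6 <= wb -> wb <= 6 * (nwedges E)%:R ->
     PL != finset.set0 -> appropriate E bb wb eps PH PL ->
     (nbutterflies E)%:R * (1 - 17700%:R * eps) <= \sum_(e in PL) wtE E R PL e
     /\ \sum_(e in PL) wtE E R PL e <= (nbutterflies E)%:R).
Proof.
have sum_wtE_le (PL : {set U * L}) : \sum_(e in PL) wtE E R PL e <= (nbutterflies E)%:R.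
  rewrite sum_wtE ler_nat subset_leq_card //.
  by apply/fintype.subsetP => X; rewrite inE => /andP[].
split=> [PH PL _ _|eps bb wb PH PL eps_gt0 _ bb_ge bb_le wb_ge _ _ PH_PL].
  exact: sum_wtE_le.
split; last exact: sum_wtE_le.
have := nbutterflies_le_meeting_add PH_PL.1; rewrite -(ler_nat R) natrD -sum_wtE.
have := nbutterflies_heavy_side_le eps_gt0 bb_ge bb_le wb_ge PH_PL.
lra.
Qed.
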